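(* Let $e:\mathbb{R}^3\to\mathbb{R}^4$ be the map $e(x_1,x_2,x_3)=(-x_1+x_2+x_3,\ x_1-x_2+x_3,\ x_1+x_2-x_3,\ x_1+x_2+x_3)$, which is an isometric embedding of $(\mathbb{R}^3,\ell_1)$ into $(\mathbb{R}^4,\ell_\infty)$. Let $X\subseteq\mathbb{R}^3$ be $1/8$-dense in $(\mathbb{R}^3,\ell_1)$. Then the open $1$-neighborhood $N_1(e(X))=\{y\in\mathbb{R}^4:\exists x\in X,\ \|y-e(x)\|_\infty<1\}$ of $e(X)$ in $(\mathbb{R}^4,\ell_\infty)$ is contractible.
   Context: $\ell_1$ metric: $\|x-y\|_1=\sum_i|x_i-y_i|$; $\ell_\infty$ metric: $\|x-y\|_\infty=\max_i|x_i-y_i|$. A subset $K$ of a metric space $Y$ is $\epsilon$-dense if for every $y\in Y$ there exists $k\in K$ with $d_Y(y,k)<\epsilon$. *)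

From HB Require Import structures.
From mathcomp Require Import all_boot all_order all_algebra.
From mathcomp Require Import all_classical all_reals all_analysis.
Set Implicit Arguments. Unset Strict Implicit. Unset Printing Implicit Defensive.
Import Order.TTheory GRing.Theory Num.Theory.
Import numFieldNormedType.Exports.
Local Open Scope classical_set_scope.
Local Open Scope ring_scope.

Definition l1dist (R : realType) (n : nat) (x y : 'rV[R]_n) : R :=
  \sum_(i < n) `|x ord0 i - y ord0 i|.

Definition linfdist (R : realType) (n : nat) (x y : 'rV[R]_n) : R :=
  \big[Num.max/0]_(i < n) `|x ord0 i - y ord0 i|.

Definition eps_dense (R : realType) (Y : Type) (d : Y -> Y -> R)
  (eps : R) (K : set Y) : Prop :=
  forall y : Y, exists k : Y, K k /\ d y k < eps.

Definition emb (R : realType) (x : 'rV[R]_3) : 'rV[R]_4 :=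
  let x1 := x ord0 (inord 0) in
  let x2 := x ord0 (inord 1) in
  let x3 := x ord0 (inord 2) in
  \row_(i < 4)
    (if val i == 0%N then - x1 + x2 + x3
     else if val i == 1%N then x1 - x2 + x3
     else if val i == 2%N then x1 + x2 - x3
     else x1 + x2 + x3).

Definition nbhd1 (R : realType) (X : set 'rV[R]_3) : set 'rV[R]_4 :=
  [set y | exists2 x, X x & linfdist y (emb x) < 1].

Definition contractible (R : realType) (n : nat) (U : set 'rV[R]_n) : Prop :=
  exists (p : 'rV[R]_n) (H : 'rV[R]_n * R -> 'rV[R]_n),
    [/\ U p,
        {within U `*` [set t : R | 0 <= t <= 1], continuous H},
        (forall x t, U x -> 0 <= t <= 1 -> U (H (x, t))),
        (forall x, U x -> H (x, 0) = x) &
        (forall x, U x -> H (x, 1) = p)].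

From HB Require Import structures.
From mathcomp Require Import all_boot all_order all_algebra.
From mathcomp Require Import all_classical all_reals all_analysis.
From mathcomp Require Import lra ring.
Import Order.TTheory GRing.Theory Num.Theory.
Import numFieldNormedType.Exports.
Local Open Scope classical_set_scope.
Local Open Scope ring_scope.

(* The image of e is the hyperplane {defect = 0}, where
   defect y = y1 + y2 + y3 - y4.  Any X that is 1/8-dense for l1 makes the
   neighbourhood contain the whole slab |defect| <= 3: the e-preimage of the
   projection of v onto the hyperplane is within 1/8 of some x in X, and
   e is an l1 -> l-infinity isometry, so v is within 3/4 + 1/8 < 1 of e(x).
   Since defect dir = 4 for dir = (1,1,1,-1), sliding a point of the
   neighbourhood along dir until |defect| = 3 keeps it within 1 of the same
   e(x); after that, scaling the slab towards 0 stays inside the slab. *)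

Section LinfDist.
Variable R : realType.

Lemma linfdist_lt (n : nat) (y z : 'rV[R]_n) (e : R) : 0 < e ->
  linfdist y z < e <-> forall i : 'I_n, `|y ord0 i - z ord0 i| < e.
Proof.
move=> e_gt0; rewrite /linfdist; split=> [/bigmax_ltP[_ yz] i | yz].
  exact: yz.
by apply/bigmax_ltP; split=> // i _; apply: yz.
Qed.

End LinfDist.

Lemma forall_ord4 (P : 'I_4 -> Prop) :
  (forall i, P i) <-> [/\ P (inord 0), P (inord 1), P (inord 2) & P (inord 3)].
Proof.
split=> [P_all | [P0 P1 P2 P3]]; first by split.
have Eord k (lt_k4 : (k < 4)%N) : Ordinal lt_k4 = inord k.
  by apply/val_inj; rewrite /= inordK.
by case=> [[|[|[|[|k]]]] lt_k4] //; rewrite Eord.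
Qed.

Section Contraction.
Variable R : realType.
Implicit Types (x : 'rV[R]_3) (y z : 'rV[R]_4) (u t : R).

Local Notation "y !! k" := (y ord0 (inord k)) (at level 2, k at level 0).

Definition defect y : R := y !! 0 + y !! 1 + y !! 2 - y !! 3.

Definition dir : 'rV[R]_4 := \row_(i < 4) (if val i == 3%N then -1 else 1).

Definition clip u : R := Num.max (-3) (Num.min 3 u).

Definition kick y : R := (defect y - clip (defect y)) / 4.

Definition ramp t : R := Num.min 1 (2 * t).

Definition contraction (p : 'rV[R]_4 * R) : 'rV[R]_4 :=
  ramp (1 - p.2) *: (p.1 - (ramp p.2 * kick p.1) *: dir).

Lemma embE x :
  [/\ (emb x) !! 0 = - x !! 0 + x !! 1 + x !! 2, (emb x) !! 1 = x !! 0 - x !! 1 + x !! 2,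
      (emb x) !! 2 = x !! 0 + x !! 1 - x !! 2 & (emb x) !! 3 = x !! 0 + x !! 1 + x !! 2].
Proof. by rewrite /emb !mxE /= !inordK. Qed.

Lemma defect_emb x : defect (emb x) = 0.
Proof. by rewrite /defect; have [-> -> -> ->] := embE x; ring. Qed.

Lemma defectZ_slide (a b : R) y : defect (a *: (y - b *: dir)) = a * (defect y - 4 * b).
Proof. by rewrite /defect !mxE /= !inordK //=; ring. Qed.

Lemma l1dist3E x x' :
  l1dist x x' = `|x !! 0 - x' !! 0| + `|x !! 1 - x' !! 1| + `|x !! 2 - x' !! 2|.
Proof.
rewrite /l1dist !big_ord_recr big_ord0 /= add0r.
have Eord (i : 'I_3) k : val i = k -> i = inord k by move=> <-; rewrite inord_val.
by rewrite (Eord (widen_ord _ (widen_ord _ ord_max)) 0) // (Eord (widen_ord _ ord_max) 1) //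
   (Eord ord_max 2).
Qed.

Lemma linfdist4_lt1 y z : linfdist y z < 1 <->
  [/\ `|y !! 0 - z !! 0| < 1, `|y !! 1 - z !! 1| < 1, `|y !! 2 - z !! 2| < 1
    & `|y !! 3 - z !! 3| < 1].
Proof. by rewrite linfdist_lt // forall_ord4. Qed.

Lemma nbhd1_slab (X : set 'rV[R]_3) v : eps_dense (@l1dist R 3) (1 / 8) X ->
  `|defect v| <= 3 -> nbhd1 X v.
Proof.
move=> X_dense; rewrite ler_norml => /andP[defect_ge defect_le].
pose h k := v !! k - defect v / 4.
(* [x0] is the e-preimage of the orthogonal projection of [v] onto [{defect = 0}]. *)
pose x0 : 'rV[R]_3 := \row_(j < 3)
  (if val j == 0%N then (h 1%N + h 2%N) / 2
   else if val j == 1%N then (h 0%N + h 2%N) / 2 else (h 0%N + h 1%N) / 2).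
have [x0_0 x0_1 x0_2] : [/\ x0 !! 0 = (h 1%N + h 2%N) / 2,
    x0 !! 1 = (h 0%N + h 2%N) / 2 & x0 !! 2 = (h 0%N + h 1%N) / 2].
  by rewrite !mxE /= !inordK.
have [x [Xx]] := X_dense x0; rewrite l1dist3E => x0x_lt.
exists x => //; apply/linfdist4_lt1.
have [-> -> -> ->] := embE x.
have norm_bounds (a : R) : - `|a| <= a <= `|a| by rewrite -ler_norml.
have /andP[? ?] := norm_bounds (x0 !! 0 - x !! 0).
have /andP[? ?] := norm_bounds (x0 !! 1 - x !! 1).
have /andP[? ?] := norm_bounds (x0 !! 2 - x !! 2).
move: defect_ge defect_le x0_0 x0_1 x0_2; rewrite /h /defect => *.
by rewrite !ltr_norml; split; apply/andP; split; lra.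
Qed.

Lemma clipP u :
  (3 <= u /\ clip u = 3) \/ (u <= -3 /\ clip u = -3) \/ (-3 <= u <= 3 /\ clip u = u).
Proof.
rewrite /clip; have [u_le3 | u_gt3] := leP u 3.
  have [u_ge | u_lt] := leP (-3) u; last by right; left; split=> //; lra.
  by right; right; split=> //; lra.
by rewrite max_r; [left; split=> //; lra | lra].
Qed.

Lemma normr_clip u : `|clip u| <= 3.
Proof. by rewrite ler_norml; case: (clipP u) => [[_ ->]|[[_ ->]|[/andP[? ?] ->]]]; lra. Qed.

Lemma ramp_ge0_le1 t : 0 <= t -> 0 <= ramp t <= 1.
Proof. by move=> t_ge0; rewrite /ramp; have [] := leP 1 (2 * t); lra. Qed.

Lemma ramp_eq1 t : 1 / 2 <= t -> ramp t = 1.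
Proof. by move=> t_ge; rewrite /ramp min_l //; lra. Qed.

Lemma ramp0 : ramp 0 = 0.
Proof. by rewrite /ramp mulr0 min_r ?ler01. Qed.

Lemma linfdist_slide y z m : defect z = 0 -> linfdist y z < 1 -> 0 <= m <= 1 ->
  linfdist (y - (m * kick y) *: dir) z < 1.
Proof.
move=> defect_z /linfdist4_lt1[d0 d1 d2 d3] /andP[m_ge0 m_le1]; apply/linfdist4_lt1.
have shrink e : (0 <= e -> 0 <= m * e <= e) /\ (e <= 0 -> e <= m * e <= 0).
  by split=> ?; apply/andP; split; nra.
have := shrink (kick y); have := clipP (defect y).
rewrite /kick; move: (clip _) (m * _) => c s.
move: d0 d1 d2 d3 defect_z; rewrite /defect !mxE /= !inordK //= !ltr_norml.
by move=> /andP[? ?] /andP[? ?] /andP[? ?] /andP[? ?] ? ? ?; split; apply/andP; split; lra.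
Qed.

Lemma defect_continuous : continuous defect.
Proof.
move=> y; apply: (@continuousB _ R^o _ (fun _ => _) (fun _ => _)); last exact: coord_continuous.
apply: (@continuousD _ R^o _ (fun _ => _) (fun _ => _)); last exact: coord_continuous.
by apply: (@continuousD _ R^o _ (fun _ => _) (fun _ => _)); exact: coord_continuous.
Qed.

Lemma clip_continuous : continuous clip.
Proof.
move=> u; apply: (@continuous_max _ _ (fun _ => _) (fun _ => _)); first exact: cst_continuous.
by apply: (@continuous_min _ _ (fun _ => _) (fun _ => _)); [exact: cst_continuous | exact: cvg_id].
Qed.

Lemma kick_continuous : continuous kick.
Proof.
move=> y; apply: (@continuousM _ _ (fun _ => _) (fun _ => _)); last exact: cst_continuous.
apply: (@continuousB _ R^o _ (fun _ => _) (fun _ => _)); first exact: defect_continuous.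
exact: continuous_comp (defect_continuous y) (clip_continuous _).
Qed.

Lemma ramp_continuous : continuous ramp.
Proof.
move=> t; apply: (@continuous_min _ _ (fun _ => _) (fun _ => _)); first exact: cst_continuous.
by apply: (@continuousM _ _ (fun _ => _) (fun _ => _)); [exact: cst_continuous | exact: cvg_id].
Qed.

Lemma contraction_continuous : continuous contraction.
Proof.
move=> p; apply: (@continuousZ _ _ _ (fun _ => _) (fun _ => _)).
  apply: continuous_comp (ramp_continuous _).
  by apply: (@continuousB _ R^o _ (fun _ => _) (fun _ => _)); [exact: cst_continuous | exact: cvg_snd].
apply: (@continuousB _ _ _ (fun _ => _) (fun _ => _)); first exact: cvg_fst.
apply: (@continuousZ _ _ _ (fun _ => _) (fun _ => _)); last exact: cst_continuous.
apply: (@continuousM _ _ (fun _ => _) (fun _ => _)); first exact: continuous_comp cvg_snd (ramp_continuous _).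
exact: continuous_comp cvg_fst (kick_continuous _).
Qed.

Lemma nbhd1_contraction (X : set 'rV[R]_3) y t :
  eps_dense (@l1dist R 3) (1 / 8) X -> nbhd1 X y -> 0 <= t <= 1 ->
  nbhd1 X (contraction (y, t)).
Proof.
move=> X_dense [x Xx yx_lt] /andP[t_ge0 t_le1]; rewrite /contraction /=.
have [t_le | t_gt] := lerP t (1 / 2).
  exists x => //; rewrite ramp_eq1 ?scale1r; last lra.
  by apply: linfdist_slide => //; [exact: defect_emb | exact: ramp_ge0_le1].
apply: nbhd1_slab => //.
rewrite defectZ_slide [ramp t]ramp_eq1 ?mul1r; last lra.
have -> : defect y - 4 * kick y = clip (defect y) by rewrite /kick; field.
rewrite normrM.
have /andP[ramp_ge0 ramp_le1] : 0 <= ramp (1 - t) <= 1 by apply: ramp_ge0_le1; lra.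
by rewrite ger0_norm // -[3]mul1r ler_pM ?normr_clip.
Qed.

End Contraction.

Theorem theorem3p2 (R : realType) (X : set 'rV[R]_3) :
  eps_dense (@l1dist R 3) (1 / 8) X ->
  contractible (nbhd1 X).
Proof.
move=> X_dense; exists 0, (@contraction R); split.
- by apply: nbhd1_slab => //; rewrite /defect !mxE !addr0 subrr normr0.
- exact/continuous_subspaceT/contraction_continuous.
- by move=> y t; apply: nbhd1_contraction.
- move=> y _; rewrite /contraction /= subr0 ramp0 mul0r scale0r subr0 ramp_eq1 ?scale1r //; lra.
- by move=> y _; rewrite /contraction /= subrr ramp0 scale0r.
Qed.
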